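(* For any $\boldsymbol{x},\boldsymbol{x}^\star\in\mathbb{T}^3$ there exist $N\in\mathbb{N}$ and $\underline{\omega}^N=(\omega_1,\dots,\omega_N)\in\Omega_0^N$ such that $f_{\underline{\omega}^N}(\boldsymbol{x})=\boldsymbol{x}^\star$; that is, the one-point process is exactly controllable.
   Context: $\mathbb{T}^3=\mathbb{R}^3/(2\pi\mathbb{Z})^3$ with points $\boldsymbol{x}=(x,y,z)$. Fix $U>0$ and let $\Omega_0=[-U,U]^3\times[0,2\pi)^3$, with elements $\omega=(\mathsf{A},\mathsf{B},\mathsf{C},\alpha,\beta,\gamma)$. Define maps of $\mathbb{T}^3$: $f_{(\mathsf{A},\alpha)}(x,y,z)=(x+\mathsf{A}\sin(z+\alpha),\ y+\mathsf{A}\cos(z+\alpha),\ z)$, $f_{(\mathsf{B},\beta)}(x,y,z)=(x,\ y+\mathsf{B}\sin(x+\beta),\ z+\mathsf{B}\cos(x+\beta))$, $f_{(\mathsf{C},\gamma)}(x,y,z)=(x+\mathsf{C}\cos(y+\gamma),\ y,\ z+\mathsf{C}\sin(y+\gamma))$, and $f_\omega=f_{(\mathsf{C},\gamma)}\circ f_{(\mathsf{B},\beta)}\circ f_{(\mathsf{A},\alpha)}$. For $\underline{\omega}^N=(\omega_1,\dots,\omega_N)\in\Omega_0^N$, $f_{\underline{\omega}^N}=f_{\omega_N}\circ\cdots\circ f_{\omega_1}$. *)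

From Stdlib Require Import Reals List.
Open Scope R_scope.

(* Points of R^3 serve as lifts of points of T^3 = R^3/(2 pi Z)^3. *)
Definition pt3 : Type := (R * R * R)%type.

Definition cong2pi (a b : R) : Prop := exists k : Z, a - b = 2 * PI * IZR k.

Definition torus_eq (p q : pt3) : Prop :=
  match p, q with
  | (x, y, z), (x', y', z') => cong2pi x x' /\ cong2pi y y' /\ cong2pi z z'
  end.

Record omega : Type := mkOmega
  { oA : R; oB : R; oC : R; oalpha : R; obeta : R; ogamma : R }.

Definition in_Omega0 (U : R) (w : omega) : Prop :=
  -U <= oA w <= U /\ -U <= oB w <= U /\ -U <= oC w <= U /\
  0 <= oalpha w < 2 * PI /\ 0 <= obeta w < 2 * PI /\ 0 <= ogamma w < 2 * PI.

Definition fA (A alpha : R) (p : pt3) : pt3 :=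
  match p with (x, y, z) =>
    (x + A * sin (z + alpha), y + A * cos (z + alpha), z) end.

Definition fB (B beta : R) (p : pt3) : pt3 :=
  match p with (x, y, z) =>
    (x, y + B * sin (x + beta), z + B * cos (x + beta)) end.

Definition fC (C gamma : R) (p : pt3) : pt3 :=
  match p with (x, y, z) =>
    (x + C * cos (y + gamma), y, z + C * sin (y + gamma)) end.

(* f_omega = f_(C,gamma) o f_(B,beta) o f_(A,alpha) (lifted to R^3;
   well defined on T^3 by 2pi-periodicity of sin, cos) *)
Definition f_omega (w : omega) (p : pt3) : pt3 :=
  fC (oC w) (ogamma w) (fB (oB w) (obeta w) (fA (oA w) (oalpha w) p)).

Definition f_seq (ws : list omega) (p : pt3) : pt3 :=
  fold_left (fun q w => f_omega w q) ws p.

(* Each factor of f_omega is a shear that, with the other two amplitudes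
   set to zero and the phase chosen so that the relevant sine is 1 (or the
   cosine is 1), is a pure translation by its amplitude along one coordinate
   axis.  Any real displacement splits into finitely many steps of size at
   most U, so every point of R^3 is reached exactly from every other one,
   which is more than equality in T^3. *)

From Stdlib Require Import Reals Lra List.
Open Scope R_scope.

Lemma sin_cos_add_2PI_mult (t : R) (k : Z) :
  sin (t + 2 * PI * IZR k) = sin t /\ cos (t + 2 * PI * IZR k) = cos t.
Proof.
  assert (Hs : sin (PI * IZR k) = 0) by (apply sin_eq_0_1; exists k; ring).
  assert (Hs2 : sin (2 * PI * IZR k) = 0).
  { replace (2 * PI * IZR k) with (2 * (PI * IZR k)) by ring.
    rewrite sin_2a, Hs; ring. }
  assert (Hc2 : cos (2 * PI * IZR k) = 1).
  { replace (2 * PI * IZR k) with (2 * (PI * IZR k)) by ring.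
    rewrite cos_2a_sin, Hs; ring. }
  rewrite sin_plus, cos_plus, Hs2, Hc2; split; ring.
Qed.

Lemma exists_phase_in_0_2PI (z t : R) :
  exists a, 0 <= a < 2 * PI /\ sin (z + a) = sin t /\ cos (z + a) = cos t.
Proof.
  pose proof PI_RGT_0 as HPI.
  set (r := (t - z) / (2 * PI)).
  exists (2 * PI * frac_part r).
  destruct (base_fp r) as [Hfp0 Hfp1].
  split; [split; nra |].
  replace (z + 2 * PI * frac_part r) with (t + 2 * PI * IZR (- Int_part r)).
  - apply sin_cos_add_2PI_mult.
  - unfold frac_part, r; rewrite opp_IZR; field; lra.
Qed.

Lemma exists_nat_mul_bounded (U D : R) :
  0 < U -> exists (n : nat) (d : R), -U <= d <= U /\ D = INR n * d.
Proof.
  intros hU.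
  destruct (INR_unbounded (Rabs D / U)) as [n Hn].
  assert (HD : Rabs D < INR n * U).
  { apply (Rmult_lt_compat_r U) in Hn; [| lra].
    unfold Rdiv in Hn; rewrite Rmult_assoc, Rinv_l in Hn; lra. }
  assert (Hn0 : 0 < INR n) by (pose proof (Rabs_pos D); nra).
  exists n, (D / INR n).
  assert (HDn : D = INR n * (D / INR n)) by (field; lra).
  split; [| exact HDn].
  pose proof (Rle_abs D); pose proof (Rle_abs (- D)); rewrite Rabs_Ropp in *.
  set (d := D / INR n) in *; split; nra.
Qed.

Definition translate (v p : pt3) : pt3 :=
  let '(a, b, c) := v in let '(x, y, z) := p in (x + a, y + b, z + c).

Definition scale3 (d : R) (v : pt3) : pt3 :=
  let '(a, b, c) := v in (d * a, d * b, d * c).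

Ltac pt3_ring := apply (f_equal2 pair); [apply (f_equal2 pair) |]; ring.

Lemma translate_scale3_0 (e p : pt3) : translate (scale3 0 e) p = p.
Proof. destruct e as [[? ?] ?], p as [[? ?] ?]; simpl; pt3_ring. Qed.

Lemma translate_scale3_add (a b : R) (e p : pt3) :
  translate (scale3 (a + b) e) p = translate (scale3 b e) (translate (scale3 a e) p).
Proof. destruct e as [[? ?] ?], p as [[? ?] ?]; simpl; pt3_ring. Qed.

Definition reachable (U : R) (p q : pt3) : Prop :=
  exists ws, Forall (in_Omega0 U) ws /\ f_seq ws p = q.

Lemma reachable_refl (U : R) (p : pt3) : reachable U p p.
Proof. exists nil; split; [constructor | reflexivity]. Qed.

Lemma reachable_trans (U : R) (p q r : pt3) :
  reachable U p q -> reachable U q r -> reachable U p r.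
Proof.
  intros [ws1 [H1 E1]] [ws2 [H2 E2]].
  exists (ws1 ++ ws2); split.
  - apply Forall_app; auto.
  - unfold f_seq in *; rewrite fold_left_app, E1; exact E2.
Qed.

Lemma reachable_f_omega (U : R) (w : omega) (p : pt3) :
  in_Omega0 U w -> reachable U p (f_omega w p).
Proof. intros Hw; exists (w :: nil); split; [constructor; auto | reflexivity]. Qed.

Section SmallSteps.

Variable U : R.
Hypothesis hU : 0 < U.
Variable e : pt3.
Hypothesis reachable_small_step :
  forall d p, -U <= d <= U -> reachable U p (translate (scale3 d e) p).

Lemma reachable_multiple_step (n : nat) (d : R) (p : pt3) :
  -U <= d <= U -> reachable U p (translate (scale3 (INR n * d) e) p).
Proof.
  intros Hd; revert p; induction n as [| n IH]; intros p.
  - rewrite Rmult_0_l, translate_scale3_0; apply reachable_refl.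
  - replace (INR (S n) * d) with (INR n * d + d) by (rewrite S_INR; ring).
    rewrite translate_scale3_add.
    apply (reachable_trans _ _ _ _ (IH p)), reachable_small_step, Hd.
Qed.

Lemma reachable_translate (D : R) (p : pt3) :
  reachable U p (translate (scale3 D e) p).
Proof.
  destruct (exists_nat_mul_bounded U D hU) as [n [d [Hd ->]]].
  apply reachable_multiple_step, Hd.
Qed.

End SmallSteps.

Lemma reachable_step_x (U d : R) (p : pt3) :
  0 < U -> -U <= d <= U -> reachable U p (translate (scale3 d (1, 0, 0)) p).
Proof.
  intros hU Hd; destruct p as [[x y] z].
  destruct (exists_phase_in_0_2PI z (PI / 2)) as [a [Ha [Hs Hc]]].
  replace (translate _ _) with (f_omega (mkOmega d 0 0 a 0 0) (x, y, z)).
  - apply reachable_f_omega; pose proof PI_RGT_0.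
    unfold in_Omega0; simpl; repeat split; lra.
  - unfold f_omega, fA, fB, fC; simpl; rewrite !Rmult_0_l, !Rplus_0_r.
    rewrite Hs, Hc, sin_PI2, cos_PI2; pt3_ring.
Qed.

Lemma reachable_step_y (U d : R) (p : pt3) :
  0 < U -> -U <= d <= U -> reachable U p (translate (scale3 d (0, 1, 0)) p).
Proof.
  intros hU Hd; destruct p as [[x y] z].
  destruct (exists_phase_in_0_2PI x (PI / 2)) as [b [Hb [Hs Hc]]].
  replace (translate _ _) with (f_omega (mkOmega 0 d 0 0 b 0) (x, y, z)).
  - apply reachable_f_omega; pose proof PI_RGT_0.
    unfold in_Omega0; simpl; repeat split; lra.
  - unfold f_omega, fA, fB, fC; simpl; rewrite !Rmult_0_l, !Rplus_0_r.
    rewrite Hs, Hc, sin_PI2, cos_PI2; pt3_ring.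
Qed.

Lemma reachable_step_z (U d : R) (p : pt3) :
  0 < U -> -U <= d <= U -> reachable U p (translate (scale3 d (0, 0, 1)) p).
Proof.
  intros hU Hd; destruct p as [[x y] z].
  destruct (exists_phase_in_0_2PI x 0) as [b [Hb [Hs Hc]]].
  replace (translate _ _) with (f_omega (mkOmega 0 d 0 0 b 0) (x, y, z)).
  - apply reachable_f_omega; pose proof PI_RGT_0.
    unfold in_Omega0; simpl; repeat split; lra.
  - unfold f_omega, fA, fB, fC; simpl; rewrite !Rmult_0_l, !Rplus_0_r.
    rewrite Hs, Hc, sin_0, cos_0; pt3_ring.
Qed.

Lemma reachable_everywhere (U : R) (p q : pt3) : 0 < U -> reachable U p q.
Proof.
  intros hU; destruct p as [[x y] z], q as [[x' y'] z'].
  set (p1 := translate (scale3 (x' - x) (1, 0, 0)) (x, y, z)).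
  set (p2 := translate (scale3 (y' - y) (0, 1, 0)) p1).
  replace (x', y', z') with (translate (scale3 (z' - z) (0, 0, 1)) p2)
    by (simpl; pt3_ring).
  apply (reachable_trans _ _ p2); [apply (reachable_trans _ _ p1) |].
  - apply (reachable_translate U hU); intros; apply reachable_step_x; auto.
  - apply (reachable_translate U hU); intros; apply reachable_step_y; auto.
  - apply (reachable_translate U hU); intros; apply reachable_step_z; auto.
Qed.

Lemma torus_eq_refl (p : pt3) : torus_eq p p.
Proof.
  destruct p as [[x y] z]; simpl.
  repeat split; exists 0%Z; ring.
Qed.

Theorem lemma3p1 (U : R) (hU : 0 < U) (x xstar : pt3) :
  exists (N : nat) (ws : list omega),
    length ws = N /\ Forall (in_Omega0 U) ws /\ torus_eq (f_seq ws x) xstar.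
Proof.
  destruct (reachable_everywhere U x xstar hU) as [ws [Hws Hreach]].
  exists (length ws), ws.
  rewrite Hreach; auto using torus_eq_refl.
Qed.
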